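(* Consider the network Polya contagion process on the complete graph on $N$ nodes with $\Delta_{r,i}(t)=\Delta_{b,i}(t)=\Delta>0$ for all nodes $i$ and times $t$. Let $\rho=\frac{\sum_{k=1}^N R_k}{\sum_{k=1}^N T_k}$. Then for every node $i$, every $n\ge 1$ and every $a\in\{0,1\}$, \[ P(Z_{i,n}=a)=\rho^a(1-\rho)^{1-a}. \]
   Context: Network Polya contagion process: $\mathcal{G}=(V,\mathcal{E})$ is a connected undirected graph, $V=\{1,\dots,N\}$, $\mathcal{N}_i'=\{i\}\cup\{v:(i,v)\in\mathcal{E}\}$; the complete graph has $\mathcal{N}_i'=V$ for all $i$. Each node $i$ has an urn initially containing $R_i\in\mathbb{Z}_{>0}$ red and $B_i\in\mathbb{Z}_{>0}$ black balls, $T_i=R_i+B_i$. The super urn of node $i$ is the union of the urns of nodes in $\mathcal{N}_i'$. At each time $t=1,2,\dots$ every node $i$ simultaneously draws from its super urn; $Z_{i,t}=1$ if red, $0$ if black; then $\Delta_{r,i}(t)$ red balls (if red drawn) or $\Delta_{b,i}(t)$ black balls (if black drawn) are added to node $i$'s own urn. Given the whole history, the time-$n$ draws are conditionally independent with $P(Z_{i,n}=1\mid\{Z_j^{n-1}\}_{j=1}^N)=\dfrac{\sum_{j\in\mathcal{N}_i'}\big(R_j+\sum_{t=1}^{n-1}Z_{j,t}\Delta_{r,j}(t)\big)}{\sum_{j\in\mathcal{N}_i'}\big(T_j+\sum_{t=1}^{n-1}(Z_{j,t}\Delta_{r,j}(t)+(1-Z_{j,t})\Delta_{b,j}(t))\big)}$.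 *)

(* Discrete (finite) formalization of the network Polya
   contagion process: the law of the first n draw vectors is given by the
   chain rule from the conditional probabilities in the paper. *)
From HB Require Import structures.
From mathcomp Require Import all_boot all_order all_algebra.
Set Implicit Arguments. Unset Strict Implicit. Unset Printing Implicit Defensive.
Import Order.TTheory GRing.Theory Num.Theory.
Local Open Scope ring_scope.

Section Polya.
Variables (R : realFieldType) (N : nat).
(* nbr i j : j belongs to the closed neighbourhood N'_i of i *)
Variable nbr : 'I_N -> 'I_N -> bool.
Variables (R0 B0 : 'I_N -> nat).
(* Delta_r j t, Delta_b j t : balls added at time t (t >= 1) *)
Variables (Dr Db : 'I_N -> nat -> R).

(* a draw vector at one time: z i = true iff node i draws red (Z_{i,t}=1) *)
Definition draw := {ffun 'I_N -> bool}.

(* a history is the sequence of draw vectors at times 1, 2, ..., size h;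
   time t is stored at index t.-1 *)
Definition red_balls (h : seq draw) (j : 'I_N) : R :=
  (R0 j)%:R + \sum_(t < size h) (nth [ffun => false] h t j)%:R * Dr j t.+1.

Definition total_balls (h : seq draw) (j : 'I_N) : R :=
  (R0 j + B0 j)%:R +
  \sum_(t < size h) (if nth [ffun => false] h t j then Dr j t.+1 else Db j t.+1).

(* P(Z_{i,n} = 1 | history h of the first n-1 draws) *)
Definition prob_red (h : seq draw) (i : 'I_N) : R :=
  (\sum_(j | nbr i j) red_balls h j) / (\sum_(j | nbr i j) total_balls h j).

(* conditional probability of the draw vector z given the history h
   (conditional independence across nodes) *)
Definition step_prob (h : seq draw) (z : draw) : R :=
  \prod_i (if z i then prob_red h i else 1 - prob_red h i).

Definition hist_prob (s : seq draw) : R :=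
  \prod_(t < size s) step_prob (take t s) (nth [ffun => false] s t).

(* P(Z_{i,n} = a), for n >= 1 *)
Definition probZ (n : nat) (i : 'I_N) (a : nat) : R :=
  \sum_(s : n.-tuple draw | nat_of_bool (nth [ffun => false] s n.-1 i) == a)
     hist_prob s.
End Polya.

Definition complete_nbr (N : nat) : 'I_N -> 'I_N -> bool := fun _ _ => true.

(* On the complete graph every node draws from the same super urn, so all
   nodes share the red fraction [R_t/T_t] of all balls.  One round adds
   [N Delta] balls, [Delta] for each red draw being red, and the expected
   number of red draws is [N R_t/T_t]; hence the red fraction is a martingale
   of the process on histories.  Conditioning on the first [n-1] rounds,
   [P(Z_{i,n} = 1)] is the expected red fraction after [n-1] rounds, which by
   the martingale property is the initial fraction. *)

From HB Require Import structures.
From mathcomp Require Import all_boot all_order all_algebra.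
From mathcomp Require Import ring.
Set Implicit Arguments. Unset Strict Implicit. Unset Printing Implicit Defensive.
Import Order.TTheory GRing.Theory Num.Theory.
Local Open Scope ring_scope.

Lemma big_tuple0 (R : nmodType) (T : finType) (F : 0.-tuple T -> R) :
  \sum_(s : 0.-tuple T) F s = F [tuple].
Proof. by rewrite (big_pred1 [tuple]) // => s; apply/esym/eqP; apply: tuple0. Qed.

Lemma big_tupleS (R : nmodType) (T : finType) (n : nat) (F : n.+1.-tuple T -> R) :
  \sum_(s : n.+1.-tuple T) F s = \sum_(z : T) \sum_(s : n.-tuple T) F [tuple of z :: s].
Proof.
rewrite pair_bigA (reindex (fun p : T * n.-tuple T => [tuple of p.1 :: p.2])) //=.
exists (fun s : n.+1.-tuple T => (thead s, behead_tuple s)).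
  by move=> [z s] _ /=; congr pair; apply: val_inj.
by move=> s _; rewrite [in RHS](tuple_eta s).
Qed.

Definition bern {R : pzRingType} (p : R) (b : bool) : R := if b then p else 1 - p.

Lemma bern_nat (R : pzRingType) (p : R) (a : nat) :
  (a <= 1)%N -> bern p (a == 1)%N = p ^+ a * (1 - p) ^+ (1 - a).
Proof. by case: a => [|[|]] //= _; rewrite ?expr0 ?expr1 ?mul1r ?mulr1. Qed.

Section ProductBernoulli.
Variables (R : comPzRingType) (I : finType) (p : I -> R).

Lemma sum_prod_bern : \sum_(z : {ffun I -> bool}) \prod_j bern (p j) (z j) = 1.
Proof.
rewrite -(bigA_distr_bigA (fun j => bern (p j))) /=.
by apply: big1 => j _; rewrite big_bool /= addrC subrK.
Qed.

Lemma sum_prod_bern_marginal (i : I) (b : bool) :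
  \sum_(z : {ffun I -> bool} | z i == b) \prod_j bern (p j) (z j) = bern (p i) b.
Proof.
pose G j c := bern (p j) c * (if j == i then (c == b)%:R else 1).
have -> : \sum_(z : {ffun I -> bool} | z i == b) \prod_j bern (p j) (z j)
          = \sum_(z : {ffun I -> bool}) \prod_j G j (z j).
  rewrite big_mkcond; apply: eq_bigr => z _; rewrite /G big_split /=.
  have -> : \prod_j (if j == i then (z j == b)%:R else 1) = (z i == b)%:R :> R.
    by rewrite (bigD1 i) //= eqxx big1 ?mulr1 // => j /negbTE ->.
  by case: (z i == b); rewrite ?mulr1 ?mulr0.
rewrite -bigA_distr_bigA /= (bigD1 i) //= [X in _ * X]big1 ?mulr1.
  by rewrite big_bool /G eqxx; clear G; case: b; rewrite /= ?mulr1 ?mulr0 ?addr0 ?add0r.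
by move=> j /negbTE ji; rewrite big_bool /G ji !mulr1 /= addrC subrK.
Qed.

Lemma sum_prod_bern_count :
  \sum_(z : {ffun I -> bool}) (\prod_j bern (p j) (z j)) * \sum_j (z j)%:R
  = \sum_j p j.
Proof.
under eq_bigr do rewrite mulr_sumr.
rewrite exchange_big /=; apply: eq_bigr => j _.
rewrite -[p j]/(bern (p j) true) -sum_prod_bern_marginal [RHS]big_mkcond /=.
by apply: eq_bigr => z _; case: (z j); rewrite ?mulr1 ?mulr0.
Qed.

End ProductBernoulli.

Section HistoryChain.
Variables (R : comPzRingType) (T : finType) (x0 : T) (K : seq T -> T -> R).

Definition path_prob (h s : seq T) : R :=
  \prod_(t < size s) K (h ++ take t s) (nth x0 s t).

Definition expect (h : seq T) (n : nat) (f : seq T -> R) : R :=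
  \sum_(s : n.-tuple T) path_prob h s * f (h ++ s).

Definition martingale (f : seq T -> R) :=
  forall h, \sum_z K h z * f (rcons h z) = f h.

Lemma path_prob_nil h : path_prob h [::] = 1.
Proof. by rewrite /path_prob big_ord0. Qed.

Lemma path_prob_cons h z s : path_prob h (z :: s) = K h z * path_prob (rcons h z) s.
Proof.
rewrite /path_prob /= big_ord_recl /= cats0; congr (_ * _).
by apply: eq_bigr => t _; rewrite /= -cat_rcons.
Qed.

Lemma eq_expect h n f g : f =1 g -> expect h n f = expect h n g.
Proof. by move=> fg; apply: eq_bigr => s _; rewrite fg. Qed.

Lemma expect0 h f : expect h 0 f = f h.
Proof. by rewrite /expect big_tuple0 /= path_prob_nil mul1r cats0. Qed.

Lemma expectS h n f :
  expect h n.+1 f = \sum_z K h z * expect (rcons h z) n f.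
Proof.
rewrite /expect big_tupleS; apply: eq_bigr => z _.
rewrite mulr_sumr; apply: eq_bigr => s _ /=.
by rewrite path_prob_cons -cat_rcons mulrA.
Qed.

Lemma expect_martingale f : martingale f -> forall n h, expect h n f = f h.
Proof.
move=> mf; elim=> [|n IHn] h; first exact: expect0.
by rewrite expectS; under eq_bigr do rewrite IHn; apply: mf.
Qed.

Lemma sum_path_prob_last (P : pred T) m h :
  \sum_(s : m.+1.-tuple T | P (nth x0 s m)) path_prob h s
  = expect h m (fun h' => \sum_(z | P z) K h' z).
Proof.
elim: m h => [|m IHm] h.
  rewrite expect0 big_mkcond big_tupleS [RHS]big_mkcond; apply: eq_bigr => z _.
  by rewrite big_tuple0 /= path_prob_cons path_prob_nil mulr1.
rewrite expectS big_mkcond big_tupleS; apply: eq_bigr => z _.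
rewrite -IHm mulr_sumr [RHS]big_mkcond; apply: eq_bigr => s _ /=.
by rewrite path_prob_cons; case: (P _); rewrite ?mulr0.
Qed.

Hypothesis K_stochastic : forall h, \sum_z K h z = 1.

Lemma martingale_bern f b : martingale f -> martingale (fun h => bern (f h) b).
Proof.
case: b => mf h //=.
by under eq_bigr do rewrite mulrBr mulr1; rewrite sumrB K_stochastic mf.
Qed.

End HistoryChain.

Section BallCounts.
Variables (R : realFieldType) (N : nat) (R0 B0 : 'I_N -> nat) (Dr Db : 'I_N -> nat -> R).

Lemma red_balls_nil j : red_balls R0 Dr [::] j = (R0 j)%:R.
Proof. by rewrite /red_balls big_ord0 addr0. Qed.

Lemma total_balls_nil j : total_balls R0 B0 Dr Db [::] j = (R0 j + B0 j)%:R.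
Proof. by rewrite /total_balls big_ord0 addr0. Qed.

Lemma red_balls_rcons h z j :
  red_balls R0 Dr (rcons h z) j = red_balls R0 Dr h j + (z j)%:R * Dr j (size h).+1.
Proof.
rewrite /red_balls size_rcons big_ord_recr /= nth_rcons ltnn eqxx addrA.
by congr (_ + _ + _); apply: eq_bigr => t _; rewrite nth_rcons ltn_ord.
Qed.

Lemma total_balls_rcons h z j :
  total_balls R0 B0 Dr Db (rcons h z) j
  = total_balls R0 B0 Dr Db h j + (if z j then Dr j (size h).+1 else Db j (size h).+1).
Proof.
rewrite /total_balls size_rcons big_ord_recr /= nth_rcons ltnn eqxx addrA.
by congr (_ + _ + _); apply: eq_bigr => t _; rewrite nth_rcons ltn_ord.
Qed.

End BallCounts.

Section CompletePolya.
Variables (R : realFieldType) (N : nat) (R0 B0 : 'I_N -> nat) (Delta : R).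
Hypotheses (R0_gt0 : forall i, (0 < R0 i)%N) (Delta_gt0 : 0 < Delta).

Local Notation D := (fun (_ : 'I_N) (_ : nat) => Delta).
Local Notation step := (step_prob (@complete_nbr N) R0 B0 D D).

Definition red_total (h : seq (draw N)) : R := \sum_j red_balls R0 D h j.
Definition ball_total (h : seq (draw N)) : R := \sum_j total_balls R0 B0 D D h j.
Definition red_fraction (h : seq (draw N)) : R := red_total h / ball_total h.

Lemma prob_red_complete h i :
  prob_red (@complete_nbr N) R0 B0 D D h i = red_fraction h.
Proof. by []. Qed.

Lemma step_prob_stochastic h : \sum_z step h z = 1.
Proof. exact: sum_prod_bern. Qed.

Lemma red_total_rcons h z :
  red_total (rcons h z) = red_total h + (\sum_j (z j)%:R) * Delta.
Proof.
by rewrite /red_total mulr_suml -big_split; apply: eq_bigr => j _; rewrite red_balls_rcons.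
Qed.

Lemma ball_total_rcons h z : ball_total (rcons h z) = ball_total h + N%:R * Delta.
Proof.
rewrite /ball_total -[in N%:R](card_ord N) -sumr_const mulr_suml -big_split /=.
by apply: eq_bigr => j _; rewrite total_balls_rcons if_same mul1r.
Qed.

Lemma ball_total_gt0 (i : 'I_N) h : 0 < ball_total h.
Proof.
have balls_ge0 j : 0 <= \sum_(t < size h) (if nth [ffun => false] h t j then Delta else Delta).
  by apply: sumr_ge0 => t _; rewrite if_same ltW.
rewrite /ball_total (bigD1 i) //= ltr_wpDr ?sumr_ge0 // => [j _|].
  by rewrite addr_ge0.
by rewrite ltr_wpDr // ltr0n addn_gt0 R0_gt0.
Qed.

Lemma red_fraction_martingale (i : 'I_N) : martingale step red_fraction.
Proof.
move=> h; have T_gt0 := ball_total_gt0 i h.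
have TD_gt0 : 0 < ball_total h + N%:R * Delta by rewrite ltr_wpDr // mulr_ge0 // ltW.
have red_draws : \sum_z step h z * \sum_j (z j)%:R = N%:R * red_fraction h.
  rewrite sum_prod_bern_count; under eq_bigr do rewrite prob_red_complete.
  by rewrite sumr_const card_ord mulr_natl.
rewrite /red_fraction.
under eq_bigr do rewrite red_total_rcons ball_total_rcons mulrA mulrDr mulrA.
rewrite -mulr_suml big_split /= -!mulr_suml step_prob_stochastic mul1r red_draws.
by rewrite /red_fraction; field; rewrite !gt_eqF.
Qed.

Lemma sum_step_prob_node h i b :
  \sum_(z : draw N | z i == b) step h z = bern (red_fraction h) b.
Proof. exact: sum_prod_bern_marginal. Qed.

Lemma red_fraction_nil :
  red_fraction [::] = (\sum_j (R0 j)%:R) / (\sum_j (R0 j + B0 j)%:R).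
Proof.
by congr (_ / _); apply: eq_bigr => j _; rewrite ?red_balls_nil ?total_balls_nil.
Qed.

Lemma probZ_complete n i a : (a <= 1)%N ->
  probZ (@complete_nbr N) R0 B0 D D n.+1 i a = bern (red_fraction [::]) (a == 1)%N.
Proof.
move=> a_le1.
have draw_eq (z : draw N) : (nat_of_bool (z i) == a) = (z i == (a == 1)%N).
  by case: (z i); case: a a_le1 => [|[|]].
transitivity (expect [ffun => false] step [::] n
                (fun h => \sum_(z : draw N | nat_of_bool (z i) == a) step h z)).
  exact: sum_path_prob_last.
under eq_expect => h do rewrite (eq_bigl _ _ draw_eq) sum_step_prob_node.
apply: expect_martingale; apply: martingale_bern.
  exact: step_prob_stochastic.
exact: red_fraction_martingale i.
Qed.

End CompletePolya.

Theorem lemma1 (R : realFieldType) (N : nat) (R0 B0 : 'I_N -> nat)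
  (HR : forall i, (0 < R0 i)%N) (HB : forall i, (0 < B0 i)%N)
  (Delta : R) (HDelta : 0 < Delta) :
  let rho := (\sum_k (R0 k)%:R) / (\sum_k (R0 k + B0 k)%:R) : R in
  forall (i : 'I_N) (n a : nat), (1 <= n)%N -> (a <= 1)%N ->
    probZ (@complete_nbr N) R0 B0 (fun _ _ => Delta) (fun _ _ => Delta) n i a
    = rho ^+ a * (1 - rho) ^+ (1 - a).
Proof.
move=> rho i [|n] a // _ a_le1.
by rewrite probZ_complete // red_fraction_nil bern_nat.
Qed.
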